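(* In base $B=2$, for every integer $\eta\ge 2$, $$\gamma_2(\eta)=\Bigl(2^{-1}\,2\uparrow\uparrow(\eta-1)\Bigr)^{3}-1,$$ i.e. with $E_1=2^{-1}2^{3}$ and $E_{m+1}=2^{-1}2^{E_m}$ for $m\ge1$, one has $\gamma_2(\eta)=E_{\eta-1}-1$.
   Context: Every integer $x>0$ is written uniquely in base $2$ as $x=\sum_{i} x_i 2^i$ with binary digits $x_i$. Define $\mathcal{H}_2(x)=\sum_{i} x_i^2$, $\mathcal{H}_2^0(x)=x$, $\mathcal{H}_2^n=\mathcal{H}_2\circ\mathcal{H}_2^{n-1}$. A positive integer $x$ is happy if $\mathcal{H}_2^n(x)=1$ for some $n\in\mathbb{N}$; its height is $\eta_2(x)=\min\{\alpha\in\mathbb{N}:\mathcal{H}_2^\alpha(x)=1\}$. For $n\in\mathbb{N}$, $\gamma_2(n)$ denotes the smallest happy number $x\ge1$ with $\eta_2(x)=n$. Adapted up-arrow notation: for reals $k,x,y,z$ and integer $n\ge1$, $k(xy\uparrow\uparrow n)^z=k\,E_n$ where $E_1=x\,y^{z}$ and $E_{m+1}=x\,y^{E_m}$ (the factor ''$xy$'' is repeated $n$ times in the tower $k\,x y^{x y^{\cdot^{\cdot^{x y^{z}}}}}$); an omitted $k$ means $k=1$. *)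

From mathcomp Require Import all_boot.
Set Implicit Arguments. Unset Strict Implicit. Unset Printing Implicit Defensive.

Definition digit2 (x i : nat) : nat := (x %/ 2 ^ i) %% 2.

(* H_2(x) = sum_i x_i^2 ; digits with index >= x are zero, so summing
   over i < x.+1 covers all digits. *)
Definition H2 (x : nat) : nat := \sum_(i < x.+1) (digit2 x i) ^ 2.

Definition happy2 (x : nat) : Prop := exists n, iter n H2 x = 1.

Definition height2 (x a : nat) : Prop :=
  iter a H2 x = 1 /\ forall b, b < a -> iter b H2 x <> 1.

Definition is_gamma2 (n g : nat) : Prop :=
  [/\ 1 <= g, happy2 g, height2 g n &
      forall x, 1 <= x -> happy2 x -> height2 x n -> g <= x].

(* Adapted up-arrow tower (2^{-1} 2 ^^ m)^3 :
   tower2 0 = 3 (the top exponent z), tower2 (m+1) = 2^{-1} * 2^(tower2 m).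
   So tower2 m = E_m for m >= 1; division by 2 is exact here. *)
Fixpoint tower2 (m : nat) : nat :=
  match m with
  | 0 => 3
  | m'.+1 => 2 ^ tower2 m' %/ 2
  end.

From mathcomp Require Import all_boot.
From mathcomp Require Import zify.

(* The binary digit-square map H2 is the binary digit sum
   (a binary digit is its own square).  Two facts about it drive everything:
   - H2 (2^k - 1) = k, since 2^k - 1 is the string of k ones;
   - 2 ^ H2 x <= x + 1, since a number with k ones in binary is >= 2^k - 1.
   Hence 2^k - 1 is the least x with H2 x = k, and it maps onto k in one step.
   Writing t m = tower2 m - 1, the tower recursion reads t (m+1) = 2^(t m) - 1
   with t 0 = 2.  By induction on m, t m has height m + 1 and is the least
   number of height m + 1: if x has height m + 2 then H2 x has height m + 1,
   so t m <= H2 x and therefore t (m+1) = 2^(t m) - 1 <= x. *)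

Lemma digit2_small y i : y < 2 ^ i -> digit2 y i = 0.
Proof. by move=> lt_y; rewrite /digit2 divn_small. Qed.

Lemma digit2S x i : digit2 x i.+1 = digit2 (x %/ 2) i.
Proof. by rewrite /digit2 expnS divnMA. Qed.

(* Any range of at least y digits computes H2 y: the digits of index >= y
   vanish because y < 2^y.  This makes the fixed range i < y.+1 in H2 harmless. *)
Lemma H2_sum_wide {y N} : y <= N -> \sum_(i < N) digit2 y i ^ 2 = H2 y.
Proof.
have vanish n : y <= n -> \sum_(i < n) digit2 y i ^ 2 = \sum_(i < y) digit2 y i ^ 2.
  move=> le_yn; rewrite -!(big_mkord xpredT (fun i => digit2 y i ^ 2)).
  rewrite (big_cat_nat (leq0n y) le_yn) /=.
  rewrite [X in _ + X]big1_seq ?addn0 // => i /andP[_]; rewrite mem_index_iota => /andP[le_yi _].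
  rewrite digit2_small //; apply: leq_trans (ltn_expl y (ltnSn 1)) _.
  by rewrite leq_exp2l.
by move=> le_yN; rewrite /H2 vanish // vanish.
Qed.

Lemma H2_rec x : H2 x = x %% 2 + H2 (x %/ 2).
Proof.
rewrite {1}/H2 big_ord_recl; congr (_ + _).
  by rewrite /digit2 expn0 divn1 modn2; case: odd.
rewrite -(H2_sum_wide (leq_div x 2)); apply: eq_bigr => i _.
by rewrite lift0 digit2S.
Qed.

Lemma H2_0 : H2 0 = 0.
Proof. by rewrite /H2 big_ord_recl big_ord0. Qed.

(* The Mersenne number 2^k - 1 consists of k ones. *)
Lemma H2_mersenne k : H2 (2 ^ k - 1) = k.
Proof.
elim: k => [|k IHk]; first by rewrite expn0 subnn H2_0.
have pos_2k : 0 < 2 ^ k by rewrite expn_gt0.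
rewrite H2_rec expnS.
have -> : (2 * 2 ^ k - 1) %% 2 = 1 by lia.
have -> : (2 * 2 ^ k - 1) %/ 2 = 2 ^ k - 1 by lia.
by rewrite IHk.
Qed.

Lemma H2_bound x : 2 ^ H2 x <= x.+1.
Proof.
elim/ltn_ind: x => -[|x] IHx; first by rewrite H2_0.
rewrite H2_rec expnD; have := IHx _ (ltn_Pdiv (ltnSn 1) (ltn0Sn x)).
by have := divn_eq x.+1 2; rewrite modn2; case: odd => /=; lia.
Qed.

Lemma half_pow2 s : 0 < s -> 2 ^ s %/ 2 = 2 ^ s.-1.
Proof. by case: s => // s _; rewrite expnS mulKn. Qed.

Lemma tower2_ge3 m : 3 <= tower2 m.
Proof.
elim: m => [|m IHm] //=; rewrite half_pow2 ?(leq_trans _ IHm) //.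
by apply: leq_trans (_ : 2 ^ 2 <= _); rewrite ?leq_exp2l //; lia.
Qed.

Lemma tower2S m : tower2 m.+1 = 2 ^ (tower2 m).-1.
Proof. by rewrite /= half_pow2 // (leq_trans _ (tower2_ge3 m)). Qed.

Lemma height2_H2 {x n} : x <> 1 -> height2 (H2 x) n -> height2 x n.+1.
Proof.
move=> x_neq1 [hit hmin]; split; first by rewrite iterSr.
by move=> [|b] // lt_bn; rewrite iterSr; apply: hmin.
Qed.

Lemma height2_pred {x n} : height2 x n.+1 -> height2 (H2 x) n.
Proof.
move=> [hit hmin]; split; first by rewrite -iterSr.
by move=> b lt_bn; rewrite -iterSr; apply: hmin.
Qed.

Lemma tower2_least_height m :
  height2 (tower2 m - 1) m.+1 /\
  forall x, height2 x m.+1 -> tower2 m - 1 <= x.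
Proof.
elim: m => [|m [IHh IHmin]].
  split.
    (* 2 = 10 in binary, so H2 2 = 1 *)
    apply: height2_H2 => //; split=> [|b] //.
    by rewrite /= H2_rec /= H2_rec H2_0.
  (* H2 x = 1 forces x >= 1, and x <> 1 *)
  move=> x [hit hmin]; have := H2_bound x; rewrite [H2 x]hit.
  by have := hmin 0 isT; rewrite /=; lia.
have ge3 := tower2_ge3 m.
have -> : tower2 m.+1 - 1 = 2 ^ (tower2 m - 1) - 1 by rewrite tower2S; congr (2 ^ _ - 1); lia.
split.
  apply: height2_H2; last by rewrite H2_mersenne.
  have : 2 ^ 2 <= 2 ^ (tower2 m - 1) by rewrite leq_exp2l //; lia.
  lia.
move=> x hx; have le_H2x := IHmin _ (height2_pred hx).
have : 2 ^ (tower2 m - 1) <= 2 ^ H2 x by rewrite leq_exp2l.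
by have := H2_bound x; lia.
Qed.

Theorem mainTheorem11 (eta : nat) : 2 <= eta -> is_gamma2 eta (tower2 eta.-1 - 1).
Proof.
case: eta => [|m] //= _.
have [height_t least_t] := tower2_least_height m.
split=> //; first by have := tower2_ge3 m; lia.
  by exists m.+1; case: height_t.
by move=> x _ _; apply: least_t.
Qed.
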